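(* Let $H$ be a fixed connected graph with $k=|V(H)|>1$. Let $G$ be an online graph with vertices $v_1,\dots,v_n$ (in order of appearance) and let $b_1,\dots,b_n\in\{0,1\}$ be advice bits with $b_t$ assigned to $v_t$. Suppose every induced copy of $H$ in $G$ contains at least one vertex $v_t$ with $b_t=1$. Then there is an online graph $G'$ with vertices $v_1,\dots,v_n,v_{n+1},\dots,v_{n'}$ such that $G'_n=G$ (the first $n$ revealed vertices of $G'$ induce exactly $G$), and the advice sequence $b'$ defined by $b'_t=b_t$ for $t\le n$ and $b'_t=0$ for $t>n$ is correct for $G'$ and is the only correct advice for $G'$; that is, the set $\{v_t: b_t=1\}$ is the unique minimum-size set $S\subseteq V(G')$ such that $G'-S$ is $H$-free.
   Context: All graphs are finite, simple and undirected. An induced copy of $H$ in $G$ is an induced subgraph isomorphic to $H$; $G$ is $H$-free if it has none. For $S\subseteq V(G)$, $G-S=G[V(G)\setminus S]$. An online graph has its vertices revealed one at a time, with $G_t$ denoting the subgraph induced by the first $t$ revealed vertices. Advice (predictions) assigns one bit to each vertex; it is correct for a graph if the set of vertices with bit $1$ is a minimum-size set $S$ with $G-S$ $H$-free. *)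

From mathcomp Require Import all_boot.
Set Implicit Arguments. Unset Strict Implicit. Unset Printing Implicit Defensive.

Definition simple_graph (V : finType) (e : rel V) : Prop :=
  symmetric e /\ irreflexive e.

Definition connected_graph (V : finType) (e : rel V) : Prop :=
  forall x y : V, connect e x y.

Definition induced_copy (VH VG : finType) (eH : rel VH) (eG : rel VG)
  (f : VH -> VG) : Prop :=
  injective f /\ forall x y : VH, eG (f x) (f y) = eH x y.

(* G - S is H-free: every induced copy of H in G meets S
   (an induced copy of H in G - S is exactly an induced copy of H in G
    avoiding S). *)
Definition minus_H_free (VH VG : finType) (eH : rel VH) (eG : rel VG)
  (S : {set VG}) : Prop :=
  forall f : VH -> VG, induced_copy eH eG f -> exists x : VH, f x \in S.

(* S is a minimum-size set whose removal makes G H-free, i.e. the advice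
   with 1-set S is correct for G. *)
Definition min_H_deletion (VH VG : finType) (eH : rel VH) (eG : rel VG)
  (S : {set VG}) : Prop :=
  minus_H_free eH eG S /\
  forall T : {set VG}, minus_H_free eH eG T -> #|S| <= #|T|.

From mathcomp Require Import all_boot.
Set Implicit Arguments. Unset Strict Implicit. Unset Printing Implicit Defensive.

(* Glue to every advised vertex t more than |V(G)| copies of H, each sharing
   only the vertex t with G and with the others. The advised set S still meets
   every induced copy of H: a copy that uses a pendant vertex but avoids its
   anchor t would, H being connected, lie inside one pendant copy of H minus a
   vertex, which is too small. Conversely a deletion set T missing some t in S
   must hit each of the pendant copies at t in a different vertex, so |T| is
   larger than |S|; hence every minimum deletion set contains S and equals it. *)

Lemma connect_ind (T : finType) (e : rel T) (P : T -> Prop) x y :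
  P x -> (forall z z', e z z' -> P z -> P z') -> connect e x y -> P y.
Proof.
move=> Px step /connectP [p pth ->].
elim: p x pth Px => [|z p IH] x //= /andP [exz pth] Px.
exact: IH pth (step _ _ exz Px).
Qed.

Lemma connected_exists_adj (VH : finType) (eH : rel VH) :
  connected_graph eH -> 1 < #|VH| -> forall x, exists y, eH x y.
Proof.
move=> Hconn Hk x.
have [y neq_yx] : exists y, y != x.
  case: (pickP (fun y => y != x)) => [y Hy|all_x]; first by exists y.
  suff : #|VH| <= 1 by rewrite leqNgt Hk.
  rewrite -(card1 x); apply/subset_leq_card/subsetP => y _.
  by rewrite inE; move/negbFE: (all_x y).
case: (pickP (eH x)) => [z Hz|no_adj]; first by exists z.
case/eqP: neq_yx; apply: (@connect_ind _ _ (eq^~ x) x y erefl _ (Hconn x y)).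
by move=> z z' ezz' Ezx; rewrite Ezx no_adj in ezz'.
Qed.

Lemma simple_graph_relpre (V W : finType) (f : W -> V) (e : rel V) :
  simple_graph e -> simple_graph (relpre f e).
Proof. by move=> [sym irr]; split=> [x y|x] /=; [exact: sym | exact: irr]. Qed.

Section Sunflower.
Variables (VH V : finType) (eH : rel VH) (e : rel V).

Definition unique_min_H_deletion (S : {set V}) : Prop :=
  min_H_deletion eH e S /\ forall T, min_H_deletion eH e T -> T = S.

Definition sunflower (v : V) (m : nat) (g : 'I_m -> VH -> V) : Prop :=
  (forall j, induced_copy eH e (g j)) /\
  (forall j j' x x', g j x = g j' x' -> g j x != v -> j = j').

Lemma sunflower_card_hitting v m (g : 'I_m -> VH -> V) T :
  sunflower v g -> minus_H_free eH e T -> v \notin T -> m <= #|T|.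
Proof.
move=> [gcopy gdisj] Tfree vNT.
have hit j : exists x, g j x \in T := Tfree _ (gcopy j).
pose h j := if [pick x | g j x \in T] is Some x then g j x else v.
have hE j : exists2 x, h j = g j x & g j x \in T.
  rewrite /h; case: pickP => [x Tx|none]; first by exists x.
  by have [x Tx] := hit j; move: (none x); rewrite Tx.
have h_inj : injective h.
  move=> j j' hjj'; have [x Ex Tx] := hE j; have [x' Ex' _] := hE j'.
  apply: (gdisj j j' x x'); first by rewrite -Ex -Ex'.
  by apply: contraNneq vNT => <-.
rewrite -[m]card_ord -cardsT -(card_imset _ h_inj).
apply/subset_leq_card/subsetP => _ /imsetP [j _ ->].
by have [x -> Tx] := hE j.
Qed.

Lemma sunflowers_unique_min_H_deletion S m :
  minus_H_free eH e S -> #|S| < m ->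
  (forall v, v \in S -> exists g, @sunflower v m g) ->
  unique_min_H_deletion S.
Proof.
move=> Sfree ltSm petals.
have sub_or_large T : minus_H_free eH e T -> S \subset T \/ m <= #|T|.
  move=> Tfree; case: (boolP (S \subset T)) => [|/subsetPn [v vS vNT]]; first by left.
  by right; have [g gv] := petals v vS; exact: sunflower_card_hitting gv Tfree vNT.
have Smin : min_H_deletion eH e S.
  split=> // T /sub_or_large [/subset_leq_card //|leT].
  exact: leq_trans (ltnW ltSm) leT.
split=> // T [Tfree Tmin]; have leST := Tmin S Sfree.
case: (sub_or_large T Tfree) => [subST|leT].
  by apply/eqP; rewrite eq_sym eqEcard subST leST.
by have := leq_trans leT leST; rewrite leqNgt ltSm.
Qed.

End Sunflower.

Section Relabel.
Variables (VH V W : finType) (eH : rel VH) (e : rel V).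
Variables (phi : W -> V) (psi : V -> W).
Hypotheses (phiK : cancel phi psi) (psiK : cancel psi phi).

Lemma induced_copy_comp_phi f :
  induced_copy eH (relpre phi e) f -> induced_copy eH e (phi \o f).
Proof. by move=> [f_inj adj]; split=> // x y /(can_inj phiK) /f_inj. Qed.

Lemma induced_copy_comp_psi g :
  induced_copy eH e g -> induced_copy eH (relpre phi e) (psi \o g).
Proof.
move=> [g_inj adj]; split=> [x y /(can_inj psiK) /g_inj //|x y /=].
by rewrite !psiK.
Qed.

Lemma minus_H_free_relabel (T : {set V}) :
  minus_H_free eH (relpre phi e) (psi @: T) <-> minus_H_free eH e T.
Proof.
split=> Tfree f fcopy.
  have [x] := Tfree _ (induced_copy_comp_psi fcopy).
  by rewrite /= (mem_imset _ _ (can_inj psiK)); exists x.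
have [x Tx] := Tfree _ (induced_copy_comp_phi fcopy).
by exists x; rewrite -[f x]phiK imset_f.
Qed.

Lemma imset_relabelK (T : {set W}) : psi @: (phi @: T) = T.
Proof. by rewrite -imset_comp (eq_imset _ phiK) imset_id. Qed.

Lemma min_H_deletion_relabel (S : {set V}) :
  min_H_deletion eH (relpre phi e) (psi @: S) <-> min_H_deletion eH e S.
Proof.
have card_psi (T : {set V}) : #|psi @: T| = #|T| := card_imset _ (can_inj psiK).
split=> -[Sfree Smin]; split.
- exact/minus_H_free_relabel.
- by move=> T /minus_H_free_relabel Tfree; rewrite -!card_psi; apply: Smin.
- exact/minus_H_free_relabel.
- move=> T; rewrite -(imset_relabelK T) => /minus_H_free_relabel Tfree.
  by rewrite !card_psi; apply: Smin.
Qed.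

Lemma unique_min_H_deletion_relabel (S : {set V}) :
  unique_min_H_deletion eH e S ->
  unique_min_H_deletion eH (relpre phi e) (psi @: S).
Proof.
move=> [Smin Suniq]; split; first exact/min_H_deletion_relabel.
by move=> T; rewrite -(imset_relabelK T) => /min_H_deletion_relabel /Suniq ->.
Qed.

End Relabel.

Section PendantCopies.
Variables (VH V : finType) (eH : rel VH) (e : rel V) (b : V -> bool).
Variables (h0 : VH) (m : nat).
Hypotheses (Hsimple : simple_graph eH) (Hconn : connected_graph eH).
Hypothesis (Hk : 1 < #|VH|).

(* [inr (t, j, h)] is the vertex [h] of the [j]-th copy of [H] glued to [t],
   whose vertex [h0] is identified with [inl t]; vertices [inr (t, j, h0)] and
   those with [~~ b t] are left isolated. *)
Definition pendant_rel : rel (V + V * 'I_m * VH) := fun x y =>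
  match x, y with
  | inl u, inl v => e u v
  | inl u, inr (t, _, h) => b t && (u == t) && eH h0 h
  | inr (t, _, h), inl u => b t && (u == t) && eH h0 h
  | inr (t, j, h), inr (t', j', h') =>
      [&& b t, t == t', j == j', h != h0, h' != h0 & eH h h']
  end.

Definition pendant_set : {set V + V * 'I_m * VH} := [set inl t | t in [set t | b t]].

Lemma pendant_rel_simple : simple_graph e -> simple_graph pendant_rel.
Proof.
move: Hsimple => [symH irrH] [symG irrG]; split.
  move=> [u|[[t j] h]] [u'|[[t' j'] h']] //=.
  rewrite (eq_sym t') (eq_sym j') (symH h').
  case: (t =P t') => [<-|_]; last by rewrite !andbF.
  by case: (b t); case: (j == j'); case: (h != h0); case: (h' != h0).
by move=> [u|[[t j] h]] /=; [exact: irrG | rewrite irrH !andbF].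
Qed.

Lemma pendant_rel_inr t j h y :
  pendant_rel (inr (t, j, h)) y ->
  [/\ b t, h != h0 & y = inl t \/ exists2 h', h' != h0 & y = inr (t, j, h')].
Proof.
case: y => [u|[[t' j'] h']] /=.
  case/andP=> /andP [-> /eqP ->] adj; split; [done | | by left].
  by apply: contraTneq adj => ->; rewrite (proj2 Hsimple).
by case/and5P=> -> /eqP <- /eqP <- -> /andP [h'h0 _]; split=> //; right; exists h'.
Qed.

Lemma pendant_copy_anchor f x t j h :
  induced_copy eH pendant_rel f -> f x = inr (t, j, h) ->
  b t /\ exists z, f z = inl t.
Proof.
move=> [f_inj adj] fx.
have [y exy] := connected_exists_adj Hconn Hk x.
have [bt hh0 _] := @pendant_rel_inr t j h (f y) ltac:(by rewrite -fx adj).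
split=> //; case: (pickP (fun z => f z == inl t)) => [z /eqP|avoid]; first by exists z.
have in_petal z : exists2 h', h' != h0 & f z = inr (t, j, h').
  apply: (@connect_ind _ _ (fun z => exists2 h', h' != h0 & f z = inr (t, j, h'))
            x z _ _ (Hconn x z)); first by exists h.
  move=> z1 z2 e12 [h1 _ f1]; have := adj z1 z2; rewrite e12 f1.
  case/pendant_rel_inr=> _ _ [f2|//].
  by move: (avoid z2); rewrite f2 eqxx.
pose pi z := if f z is inr (_, _, h') then h' else h0.
have piE z : f z = inr (t, j, pi z) by rewrite /pi; have [h' _ ->] := in_petal z.
have pi_inj : injective pi by move=> z z' E; apply: f_inj; rewrite !piE E.
have [g _ gK] := injF_bij pi_inj.
have [h' h'h0] := in_petal (g h0).
by rewrite piE gK => -[eq_h0]; rewrite eq_h0 eqxx in h'h0.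
Qed.

Lemma pendant_minus_H_free :
  (forall f, induced_copy eH e f -> exists x, b (f x)) ->
  minus_H_free eH pendant_rel pendant_set.
Proof.
move=> cover f fcopy.
case: (pickP (fun x => if f x is inr _ then true else false)) => [x|all_inl].
  case fx: (f x) => [//|[[t j] h]] _.
  have [bt [z fz]] := pendant_copy_anchor fcopy fx.
  by exists z; rewrite fz imset_f ?inE.
have [u0 _] : exists u0, f h0 = inl u0.
  by move: (all_inl h0); case: (f h0) => // u0 _; exists u0.
pose f' x := if f x is inl u then u else u0.
have f'E x : f x = inl (f' x) by rewrite /f'; move: (all_inl x); case: (f x).
have [x bx] : exists x, b (f' x).
  apply: cover; move: fcopy => [f_inj adj].
  split=> [y z E|y z]; first by apply: f_inj; rewrite !f'E E.
  by rewrite -adj !f'E.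
by exists x; rewrite f'E imset_f ?inE.
Qed.

Definition pendant_petal t (j : 'I_m) (x : VH) : V + V * 'I_m * VH :=
  if x == h0 then inl t else inr (t, j, x).

Lemma pendant_petal_sunflower t :
  irreflexive e -> b t -> sunflower eH pendant_rel (inl t) (pendant_petal t).
Proof.
move: Hsimple => [symH irrH] irrG bt; split=> [j|j j' x x'].
  split=> [x y|x y]; rewrite /pendant_petal.
    by case: (eqVneq x h0) => [->|_]; case: (eqVneq y h0) => [->|_] // [].
  case: (eqVneq x h0) => [->|xh0]; case: (eqVneq y h0) => [->|yh0] /=.
  - by rewrite irrG irrH.
  - by rewrite bt eqxx.
  - by rewrite bt eqxx symH.
  - by rewrite bt !eqxx xh0 yh0.
rewrite /pendant_petal; case: ifP => _; first by rewrite eqxx.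
by case: ifP => _ // [->].
Qed.

Lemma pendant_unique_min_H_deletion :
  simple_graph e -> #|V| < m ->
  (forall f, induced_copy eH e f -> exists x, b (f x)) ->
  unique_min_H_deletion eH pendant_rel pendant_set.
Proof.
move=> [_ irrG] ltVm cover.
apply: (sunflowers_unique_min_H_deletion (pendant_minus_H_free cover)).
  exact: leq_ltn_trans (leq_imset_card _ _) (leq_ltn_trans (max_card _) ltVm).
move=> v /imsetP [t]; rewrite inE => bt ->.
by exists (pendant_petal t); exact: pendant_petal_sunflower.
Qed.

End PendantCopies.

Section OrdSum.
Variables (n : nat) (U : finType).

Definition ord_sum_of (x : 'I_(n + #|U|)) : 'I_n + U :=
  match split x with inl i => inl i | inr k => inr (enum_val k) end.

Definition ord_of_sum (w : 'I_n + U) : 'I_(n + #|U|) :=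
  unsplit (match w with inl i => inl i | inr u => inr (enum_rank u) end).

Lemma ord_sum_ofK : cancel ord_sum_of ord_of_sum.
Proof.
move=> x; apply: val_inj; rewrite /ord_sum_of /ord_of_sum.
by case: splitP => [i|k] /= ->; rewrite ?enum_valK.
Qed.

Lemma ord_of_sumK : cancel ord_of_sum ord_sum_of.
Proof. by move=> [i|u]; rewrite /ord_sum_of /ord_of_sum unsplitK ?enum_rankK. Qed.

Lemma ord_of_sum_inl (hn : n <= n + #|U|) i : ord_of_sum (inl i) = widen_ord hn i.
Proof. exact: val_inj. Qed.

End OrdSum.

(* Online graphs: vertex v_{t+1} is the ordinal t, so an online graph with
   n vertices is an edge relation on 'I_n, and G'_n is the restriction of
   G' to the first n ordinals. *)
Theorem mainTheorem6 (VH : finType) (eH : rel VH)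
  (Hsimple : simple_graph eH) (Hconn : connected_graph eH)
  (Hk : 1 < #|VH|)
  (n : nat) (eG : rel 'I_n) (Gsimple : simple_graph eG)
  (b : 'I_n -> bool)
  (Hcover : forall f : VH -> 'I_n, induced_copy eH eG f ->
              exists x : VH, b (f x)) :
  exists (n' : nat) (hn : n <= n') (eG' : rel 'I_n'),
    [/\ simple_graph eG',
        (forall i j : 'I_n, eG' (widen_ord hn i) (widen_ord hn j) = eG i j),
        min_H_deletion eH eG' [set widen_ord hn t | t in [set t | b t]]
      & forall S : {set 'I_n'}, min_H_deletion eH eG' S ->
          S = [set widen_ord hn t | t in [set t | b t]]].
Proof.
have [h0 _] : exists h0 : VH, h0 \in VH by apply/card_gt0P; exact: ltnW.
pose U : finType := ('I_n * 'I_n.+1 * VH)%type.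
pose E := pendant_rel (m := n.+1) eH eG b h0.
have hn : n <= n + #|U| := leq_addr _ _.
have relabel_inl t : ord_of_sum (U := U) (inl t) = widen_ord hn t := ord_of_sum_inl hn t.
have ltVm : #|'I_n| < n.+1 by rewrite card_ord.
have [Bmin Buniq] := unique_min_H_deletion_relabel (@ord_sum_ofK n U) (@ord_of_sumK n U)
  (pendant_unique_min_H_deletion h0 Hsimple Hconn Hk Gsimple ltVm Hcover).
rewrite /pendant_set -imset_comp (eq_imset _ relabel_inl) in Bmin Buniq.
exists (n + #|U|), hn, (relpre (@ord_sum_of n U) E); split=> //.
- exact/simple_graph_relpre/pendant_rel_simple.
- by move=> i j; rewrite /= -!relabel_inl !ord_of_sumK.
Qed.
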